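(* $\mathrm{1QFA}\nsubseteq\mathrm{1RFA}/n$, and thus $\mathrm{1RFA}/n\neq\mathrm{1QFA}/n$.
   Context: $\mathrm{1QFA}$ is the family of languages recognized with bounded error (error probability at most a constant below $1/2$) by one-way measure-many quantum finite automata (1qfa's). A 1rfa is a one-way deterministic finite automaton satisfying the reversibility condition (each state has at most one predecessor per tape symbol). For equal-length strings $x,y$, $\genfrac{[}{]}{0pt}{}{x}{y}$ is the two-track string with $x$ on the upper track and $y$ on the lower track. $\mathrm{1RFA}/n$ (resp. $\mathrm{1QFA}/n$) is the family of languages $L$ for which there exist a 1rfa (resp. bounded-error 1qfa) $M$, an advice alphabet $\Gamma$ and an advice function $h$ with $|h(n)|=n$ such that $M$ on $\genfrac{[}{]}{0pt}{}{x}{h(|x|)}$ outputs $L(x)$ (with probability at least $1-\varepsilon$, $\varepsilon\in[0,1/2)$, in the 1qfa case). (The witness language is $\{0^m1^n\mid m,n\in\mathbb{N}\}$.) *)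

From HB Require Import structures.
From mathcomp Require Import all_boot all_algebra.
From mathcomp Require Import complex Rstruct.
Unset Printing Implicit Defensive.
Import GRing.Theory Num.Theory.
Local Open Scope ring_scope.

Definition C : numClosedFieldType := Rdefinitions.R[i].

Inductive tsym (S : Type) := LEnd | REnd | Sym of S.
Arguments LEnd {S}. Arguments REnd {S}.

Definition tape {S : Type} (w : seq S) : seq (tsym S) :=
  LEnd :: map (@Sym S) w ++ [:: REnd].

(* two-track string [x ; y] (x upper track, y lower track), |x| = |y| *)
Definition track2 {S G : Type} (x : seq S) (y : seq G) : seq (S * G) := zip x y.

Record rfa (S : Type) := RFA {
  r_n : nat;
  r_delta : 'I_r_n -> tsym S -> 'I_r_n;
  r_q0 : 'I_r_n;
  r_acc : pred 'I_r_n;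
  r_rej : pred 'I_r_n }.
Arguments r_n {S} _. Arguments r_delta {S} _ _ _. Arguments r_q0 {S} _.
Arguments r_acc {S} _ _. Arguments r_rej {S} _ _.

Definition r_halt {S : Type} (M : rfa S) (q : 'I_(r_n M)) := r_acc M q || r_rej M q.

Definition rfa_wf {S : Type} (M : rfa S) : Prop :=
  (forall q, ~~ (r_acc M q && r_rej M q)) /\
  ~~ r_halt M (r_q0 M) /\
  (forall (a : tsym S) (p1 p2 : 'I_(r_n M)),
      ~~ r_halt M p1 -> ~~ r_halt M p2 ->
      r_delta M p1 a = r_delta M p2 a -> p1 = p2).

(* run from state q on the remaining tape w; halts as soon as a halting
   state is entered. Some true = accept, Some false = reject,
   None = no halting state entered. *)
Fixpoint rfa_run {S : Type} (M : rfa S) (q : 'I_(r_n M)) (w : seq (tsym S)) : option bool :=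
  match w with
  | [::] => None
  | a :: w' =>
      let q' := r_delta M q a in
      if r_acc M q' then Some true
      else if r_rej M q' then Some false
      else rfa_run M q' w'
  end.

Definition rfa_accepts {S : Type} (M : rfa S) (w : seq S) : bool :=
  rfa_run M (r_q0 M) (tape w) == Some true.

Definition adjmx {n : nat} (A : 'M[C]_n) : 'M[C]_n := (map_mx Num.conj A)^T.
Definition unitarymx {n : nat} (A : 'M[C]_n) : Prop := A *m adjmx A = 1%:M.

Record qfa (S : Type) := QFA {
  q_n : nat;
  q_U : tsym S -> 'M[C]_q_n;              (* U_sigma acts on column vectors *)
  q_q0 : 'I_q_n;
  q_acc : pred 'I_q_n;
  q_rej : pred 'I_q_n }.
Arguments q_n {S} _. Arguments q_U {S} _ _. Arguments q_q0 {S} _.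
Arguments q_acc {S} _ _. Arguments q_rej {S} _ _.

Definition q_non {S : Type} (M : qfa S) (q : 'I_(q_n M)) := ~~ q_acc M q && ~~ q_rej M q.

Definition qfa_wf {S : Type} (M : qfa S) : Prop :=
  (forall q, ~~ (q_acc M q && q_rej M q)) /\
  q_non M (q_q0 M) /\
  (forall a, unitarymx (q_U M a)).

(* measure-many semantics: from the (unnormalized) state psi, read w; after
   each symbol apply U_sigma, measure w.r.t. E_acc/E_rej/E_non, and continue
   with the projection onto E_non. *)
Fixpoint qfa_mm {S : Type} (M : qfa S) (psi : 'cV[C]_(q_n M)) (w : seq (tsym S)) : C * C :=
  match w with
  | [::] => (0, 0)
  | a :: w' =>
      let phi := q_U M a *m psi in
      let pa := \sum_(q | q_acc M q) `|phi q 0| ^+ 2 in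
      let pr := \sum_(q | q_rej M q) `|phi q 0| ^+ 2 in
      let psi' := \col_q (if q_non M q then phi q 0 else 0) in
      let r := qfa_mm M psi' w' in
      (pa + r.1, pr + r.2)
  end.

Definition qfa_init {S : Type} (M : qfa S) : 'cV[C]_(q_n M) := \col_q (q == q_q0 M)%:R.

Definition qfa_pacc {S : Type} (M : qfa S) (w : seq S) : C := (qfa_mm M (qfa_init M) (tape w)).1.
Definition qfa_prej {S : Type} (M : qfa S) (w : seq S) : C := (qfa_mm M (qfa_init M) (tape w)).2.

Definition qfa_correct {S : Type} (M : qfa S) (eps : C) (b : bool) (w : seq S) : Prop :=
  if b then 1 - eps <= qfa_pacc M w else 1 - eps <= qfa_prej M w.

Definition in_1QFA {S : finType} (L : pred (seq S)) : Prop :=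
  exists (M : qfa S) (eps : C), qfa_wf M /\ 0 <= eps < 1/2 /\
    forall x : seq S, qfa_correct M eps (L x) x.

Definition advice (G : Type) := nat -> seq G.
Definition advice_ok {G : Type} (h : advice G) := forall n, size (h n) = n.

Definition in_1RFA_n {S : finType} (L : pred (seq S)) : Prop :=
  exists (G : finType) (h : advice G) (M : rfa (S * G)),
    advice_ok h /\ rfa_wf M /\
    forall x : seq S, rfa_accepts M (track2 x (h (size x))) = L x.

Definition in_1QFA_n {S : finType} (L : pred (seq S)) : Prop :=
  exists (G : finType) (h : advice G) (M : qfa (S * G)) (eps : C),
    advice_ok h /\ qfa_wf M /\ 0 <= eps < 1/2 /\
    forall x : seq S, qfa_correct M eps (L x) (track2 x (h (size x))).

(* The witness is L = 0*1*, with 0 = false and 1 = true.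

   L is in 1QFA: after the left endmarker a five-state 1qfa is in the state
   3/5 e1 + 4/5 e2, which the unitary for 0 fixes.  The first 1 moves the e1
   component to the rejecting state; afterwards a 0 rejects with probability
   144/625, while the right endmarker moves e2 to the accepting state.  Words
   of L are thus accepted with probability 16/25 and the others rejected with
   probability at least 9/25 + 144/625, an error of 256/625 < 1/2.

   L is not in 1RFA/n: take a 1rfa with k states and its advice for length
   k + 2.  For i <= k each prefix 0^j 1^(i-j), j <= i, has completions inside
   and outside L, so the automaton has not halted on it.  By induction on i
   these prefixes lead to pairwise distinct states: reversibility lifts an
   equality of states through the common last symbol 1, and 0^i is separated
   from the other prefixes by the completion 0 1^(k+1-i).  For i = k this
   gives k + 1 distinct states.

   Finally 1QFA is contained in 1QFA/n (ignore the advice track), so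
   1RFA/n = 1QFA/n would put L in 1RFA/n. *)

From Pilot Require Import Defs.
From mathcomp Require Import all_boot all_algebra.
From mathcomp Require Import complex Rstruct ring zify.
Set Implicit Arguments.
Unset Strict Implicit.
Unset Printing Implicit Defensive.
Import GRing.Theory Num.Theory.

Section RfaRun.
Variables (S : Type) (M : rfa S).

Lemma rfa_run_cat q s t : rfa_run M q (s ++ t) =
  if rfa_run M q s is Some b then Some b else rfa_run M (foldl (r_delta M) q s) t.
Proof.
elim: s q => [|a s IH] q //=.
by case: ifP => _ //; case: ifP => _ //; apply: IH.
Qed.

Lemma rfa_run_none_nonhalting q s :
  ~~ r_halt M q -> rfa_run M q s = None -> ~~ r_halt M (foldl (r_delta M) q s).
Proof.
elim: s q => [|a s IH] q //= _.
case: ifP => acc //; case: ifP => rej // /IH; apply.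
by rewrite /r_halt acc rej.
Qed.

End RfaRun.

Lemma zip_cat_sizel (A B : Type) (x y : seq A) (g : seq B) :
  size x <= size g -> zip (x ++ y) g = zip x g ++ zip y (drop (size x) g).
Proof. by elim: x g => [|a x IH] [|b g] //= le_xg; rewrite ?drop0 ?IH. Qed.

Section RfaWithAdvice.
Variables (S G : Type) (M : rfa (S * G)) (L : pred (seq S)) (g : seq G).
Hypothesis M_decides_L :
  forall x, size x = size g -> rfa_accepts M (track2 x g) = L x.

Definition prefix_tape (u : seq S) : seq (tsym (S * G)) :=
  LEnd :: map (@Sym _) (zip u g).

Definition prefix_state (u : seq S) : 'I_(r_n M) :=
  foldl (r_delta M) (r_q0 M) (prefix_tape u).

Lemma tape_track2_cat u y : size u <= size g ->
  tape (track2 (u ++ y) g) =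
  prefix_tape u ++ map (@Sym _) (zip y (drop (size u) g)) ++ [:: REnd].
Proof. by move=> le_ug; rewrite /tape /track2 zip_cat_sizel // map_cat -catA. Qed.

Lemma prefix_tape_cat u y : size u <= size g ->
  prefix_tape (u ++ y) = prefix_tape u ++ map (@Sym _) (zip y (drop (size u) g)).
Proof. by move=> le_ug; rewrite /prefix_tape zip_cat_sizel // map_cat. Qed.

Lemma prefix_run_undecided u y1 y2 :
  size (u ++ y1) = size g -> size (u ++ y2) = size g ->
  L (u ++ y1) -> ~~ L (u ++ y2) -> rfa_run M (r_q0 M) (prefix_tape u) = None.
Proof.
move=> size1 size2 in1 out2.
have le_ug : size u <= size g by rewrite -size1 size_cat leq_addr.
have := M_decides_L size1; have := M_decides_L size2.
rewrite /rfa_accepts !tape_track2_cat // !rfa_run_cat.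
case: (rfa_run _ _ _) => [b|] // acc2 acc1.
by move: out2 in1; rewrite -acc1 -acc2 => /negP.
Qed.

Lemma prefix_state_residual u1 u2 y :
  size u1 = size u2 -> size (u1 ++ y) = size g ->
  rfa_run M (r_q0 M) (prefix_tape u1) = None ->
  rfa_run M (r_q0 M) (prefix_tape u2) = None ->
  prefix_state u1 = prefix_state u2 -> L (u1 ++ y) = L (u2 ++ y).
Proof.
move=> eq_size size1 run1 run2 eq_state.
have size2 : size (u2 ++ y) = size g by rewrite size_cat -eq_size -size_cat.
have le_ug : size u1 <= size g by rewrite -size1 size_cat leq_addr.
rewrite -(M_decides_L size1) -(M_decides_L size2) /rfa_accepts.
rewrite !tape_track2_cat -?eq_size // !rfa_run_cat run1 run2.
by rewrite /prefix_state in eq_state; rewrite eq_state.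
Qed.

Lemma prefix_state_rcons i s : i < size g ->
  exists a, forall v, size v = i ->
    prefix_state (rcons v s) = r_delta M (prefix_state v) a.
Proof.
move=> lt_ig; case eq_drop: (drop i g) => [|c rest].
  by move: (size_drop i g); rewrite eq_drop /=; lia.
exists (Sym _ (s, c)) => v size_v.
rewrite /prefix_state -cats1 prefix_tape_cat ?size_v ?(ltnW lt_ig) // eq_drop.
by rewrite foldl_cat; case: rest {eq_drop}.
Qed.

End RfaWithAdvice.

Fixpoint lang01 (x : seq bool) : bool :=
  match x with
  | [::] => true
  | false :: x' => lang01 x'
  | true :: x' => all id x'
  end.

Definition block01 (j k : nat) : seq bool := nseq j false ++ nseq k true.

Lemma size_block01 j k : size (block01 j k) = j + k.
Proof. by rewrite size_cat !size_nseq. Qed.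

Lemma lang01_zeros_cat j y : lang01 (nseq j false ++ y) = lang01 y.
Proof. by elim: j. Qed.

Lemma lang01_ones k : lang01 (nseq k true).
Proof. by case: k => //= k; rewrite all_nseq orbT. Qed.

Lemma lang01_block01 j k : lang01 (block01 j k).
Proof. by rewrite lang01_zeros_cat lang01_ones. Qed.

Lemma lang01_ones_cat_one k y : lang01 (nseq k true ++ true :: y) = all id y.
Proof. by case: k => //= k; rewrite all_cat all_nseq /= orbT. Qed.

Section RfaAdviceLang01.
Variables (G : Type) (M : rfa (bool * G)) (g : seq G).
Hypothesis M_wf : rfa_wf M.
Hypothesis size_g : size g = (r_n M).+2.
Hypothesis M_decides_lang01 :
  forall x, size x = size g -> rfa_accepts M (track2 x g) = lang01 x.

Local Notation k := (r_n M).

Lemma block01_undecided i j : i <= k -> j <= i ->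
  rfa_run M (r_q0 M) (prefix_tape g (block01 j (i - j))) = None.
Proof.
move=> le_ik le_ji.
apply: (prefix_run_undecided M_decides_lang01
  (y1 := nseq (k.+2 - i) true) (y2 := true :: false :: nseq (k - i) true)).
- by rewrite size_cat size_block01 size_nseq size_g; lia.
- by rewrite size_cat size_block01 /= size_nseq size_g; lia.
- by rewrite /block01 -catA -nseqD lang01_block01.
- by rewrite /block01 -catA lang01_zeros_cat lang01_ones_cat_one.
Qed.

Lemma zeros_state_neq i j : i <= k -> j < i ->
  prefix_state M g (block01 i 0) != prefix_state M g (block01 j (i - j)).
Proof.
move=> le_ik lt_ji; apply/eqP => eq_state.
have := prefix_state_residual M_decides_lang01 (y := false :: nseq (k.+1 - i) true)
  _ _ (block01_undecided le_ik (leqnn i)) (block01_undecided le_ik (ltnW lt_ji)).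
rewrite subnn => /(_ _ _ eq_state).
rewrite !size_block01 size_cat size_block01 /= size_nseq size_g.
rewrite /block01 -!catA !lang01_zeros_cat /= lang01_ones.
have -> : i - j = (i - j).-1.+1 by lia.
rewrite /= all_cat all_nseq /= andbF.
by move=> /(_ ltac:(lia) ltac:(lia)).
Qed.

Lemma block01_state_inj i j j' : i <= k -> j <= i -> j' <= i ->
  prefix_state M g (block01 j (i - j)) = prefix_state M g (block01 j' (i - j')) ->
  j = j'.
Proof.
elim: i j j' => [|i IH] j j' le_ik le_ji le_j'i; first by lia.
have block01S l : l <= i -> block01 l (i.+1 - l) = rcons (block01 l (i - l)) true.
  by move=> le_li; rewrite /block01 subSn // -cats1 -catA -addn1 nseqD.
have [le_ji'|lt_ij] := leqP j i; have [le_j'i'|lt_ij'] := leqP j' i.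
- have [|a stepE] := @prefix_state_rcons _ _ M g i true; first lia.
  rewrite !block01S // !stepE ?size_block01 ?subnKC //.
  case: M_wf => _ [q0_live reversible] /reversible eq_state.
  apply: IH; rewrite ?(ltnW le_ik) //; apply: eq_state;
    apply: rfa_run_none_nonhalting => //; apply: block01_undecided; lia.
- have -> : j' = i.+1 by lia.
  by rewrite subnn => eq_state; have := zeros_state_neq le_ik le_ji'; rewrite eq_state eqxx.
- have -> : j = i.+1 by lia.
  by rewrite subnn => eq_state; have := zeros_state_neq le_ik le_j'i'; rewrite eq_state eqxx.
- lia.
Qed.

End RfaAdviceLang01.

Lemma lang01_not_in_1RFA_n : ~ in_1RFA_n (lang01 : pred (seq bool)).
Proof.
case=> G [h [M [h_ok [M_wf M_decides]]]].
set g := h (r_n M).+2.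
have size_g : size g = (r_n M).+2 by apply: h_ok.
have M_decides_lang01 x : size x = size g -> rfa_accepts M (track2 x g) = lang01 x.
  by rewrite size_g => size_x; rewrite -M_decides size_x.
pose state (j : 'I_(r_n M).+1) := prefix_state M g (block01 j (r_n M - j)).
have state_inj : injective state.
  move=> j j' /(block01_state_inj M_wf size_g M_decides_lang01) eq_jj'.
  by apply/val_inj/eq_jj'; rewrite // -ltnS.
by have := leq_card state state_inj; rewrite !card_ord ltnn.
Qed.

Local Open Scope ring_scope.

Section QfaIgnoringAdvice.
Variables (S G : Type) (M : qfa S).

Definition tsym_fst (a : tsym (S * G)) : tsym S :=
  match a with LEnd => LEnd | REnd => REnd | Sym p => Sym _ p.1 end.

Definition qfa_ignore_advice : qfa (S * G) :=
  @QFA (S * G) (q_n M) (fun a => q_U M (tsym_fst a)) (q_q0 M) (q_acc M) (q_rej M).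

Lemma qfa_ignore_advice_wf : qfa_wf M -> qfa_wf qfa_ignore_advice.
Proof. by case=> disj [q0_non U_unitary]; split=> //; split=> // a; apply: U_unitary. Qed.

Lemma qfa_mm_ignore_advice psi w :
  qfa_mm qfa_ignore_advice psi w = qfa_mm M psi (map tsym_fst w).
Proof. by elim: w psi => //= a w IH psi; rewrite IH. Qed.

Lemma tape_track2_fst (x : seq S) (h : seq G) :
  size h = size x -> map tsym_fst (tape (track2 x h)) = tape x.
Proof.
move=> size_h; rewrite /tape /track2 /= map_cat -map_comp.
by rewrite (map_comp (@Sym S) fst) -/(unzip1 _) unzip1_zip ?size_h.
Qed.

End QfaIgnoringAdvice.

Lemma in_1QFA_sub_1QFA_n (S : finType) (L : pred (seq S)) :
  in_1QFA L -> in_1QFA_n L.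
Proof.
case=> M [eps [M_wf [eps_bounds M_correct]]].
exists unit, (fun n => nseq n tt), (qfa_ignore_advice unit M), eps.
split; first by move=> n; rewrite size_nseq.
split; first exact: qfa_ignore_advice_wf.
split=> // x; move: (M_correct x).
by rewrite /qfa_correct /qfa_pacc /qfa_prej qfa_mm_ignore_advice tape_track2_fst ?size_nseq.
Qed.

Lemma qfa_mm_rej_ge0 (S : Type) (M : qfa S) psi w : 0 <= (qfa_mm M psi w).2.
Proof.
elim: w psi => //= a w IH psi; rewrite addr_ge0 //.
by apply: sumr_ge0 => q _; rewrite exprn_ge0.
Qed.

Definition mx5 (f : nat -> nat -> C) : 'M[C]_5 := \matrix_(i, j) f i j.
Definition col5 (v : nat -> C) : 'cV[C]_5 := \col_i v i.
Definition mulmx5 (f : nat -> nat -> C) (v : nat -> C) (i : nat) : C :=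
  f i 0%N * v 0%N + f i 1%N * v 1%N + f i 2%N * v 2%N + f i 3%N * v 3%N + f i 4%N * v 4%N.

Lemma sum_ord5 (F : nat -> C) :
  \sum_(q < 5) F q = F 0%N + F 1%N + F 2%N + F 3%N + F 4%N.
Proof. by rewrite !big_ord_recr big_ord0 /= add0r. Qed.

Lemma mul_mx5_col5 f v (q : 'I_5) : (mx5 f *m col5 v) q 0 = mulmx5 f v q.
Proof.
rewrite !mxE; under eq_bigr do rewrite !mxE.
exact: (sum_ord5 (fun j => f q j * v j)).
Qed.

Lemma col5_ext v v' : (forall i, (i < 5)%N -> v i = v' i) -> col5 v = col5 v'.
Proof. by move=> eq_v; apply/matrixP => i j; rewrite !mxE eq_v. Qed.

Lemma unitary_mx5 f : (forall i j, (f i j)^* = f i j) ->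
  (forall i i', (i < 5)%N -> (i' < 5)%N ->
     f i 0%N * f i' 0%N + f i 1%N * f i' 1%N + f i 2%N * f i' 2%N
       + f i 3%N * f i' 3%N + f i 4%N * f i' 4%N = (i == i')%:R) ->
  Defs.unitarymx (mx5 f).
Proof.
move=> f_real rows_orthonormal; apply/matrixP => i i'.
rewrite /adjmx !mxE; under eq_bigr do rewrite !mxE.
by rewrite (sum_ord5 (fun j => f i j * (f i' j)^* )) !f_real rows_orthonormal.
Qed.

Ltac case5 i := case: i => [|[|[|[|[|i]]]]] //=.
Ltac conjC_rat := rewrite ?(rmorph0, rmorph1, rmorphN, rmorphD, rmorphM, fmorph_div, fmorphV, rmorph_nat).

(* States: 0 initial, 1 and 2 non-halting, 3 accepting, 4 rejecting. *)
Definition U_lend (i j : nat) : C :=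
  match i, j with
  | 1, 0 => 3/5 | 2, 0 => 4/5 | 1, 1 => 4/5 | 2, 1 => -(3/5)
  | 0, 2 => 1 | 3, 3 => 1 | 4, 4 => 1 | _, _ => 0 end.

(* Fixes [3/5 e1 + 4/5 e2] and rotates [4/5 e1 - 3/5 e2] into the rejecting state. *)
Definition U_zero (i j : nat) : C :=
  match i, j with
  | 0, 0 => 1 | 1, 1 => 9/25 | 2, 1 => 12/25 | 4, 1 => 4/5
  | 1, 2 => 12/25 | 2, 2 => 16/25 | 4, 2 => -(3/5) | 3, 3 => 1
  | 1, 4 => -(4/5) | 2, 4 => 3/5 | _, _ => 0 end.

Definition U_one (i j : nat) : C :=
  match i, j with
  | 0, 0 => 1 | 4, 1 => 1 | 2, 2 => 1 | 3, 3 => 1 | 1, 4 => 1 | _, _ => 0 end.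

Definition U_rend (i j : nat) : C :=
  match i, j with
  | 0, 0 => 1 | 4, 1 => 1 | 3, 2 => 1 | 2, 3 => 1 | 1, 4 => 1 | _, _ => 0 end.

Definition U01 (a : tsym bool) : nat -> nat -> C :=
  match a with LEnd => U_lend | REnd => U_rend | Sym b => if b then U_one else U_zero end.

Lemma U01_unitary a : Defs.unitarymx (mx5 (U01 a)).
Proof.
case: a => [||[]]; apply: unitary_mx5 => [i j|i i'].
all: first [by case5 i; case5 j; conjC_rat | by case5 i; case5 i'; move=> _ _; field].
Qed.

Definition qfa01 : qfa bool :=
  @QFA bool 5 (fun a => mx5 (U01 a)) ord0 (fun q => val q == 3%N) (fun q => val q == 4%N).

Lemma qfa01_wf : qfa_wf qfa01.
Proof.
split; first by move=> q /=; case: eqP => // ->.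
by split=> // a; apply: U01_unitary.
Qed.

Definition nonhalting_part (v : nat -> C) (i : nat) : C := if (i < 3)%N then v i else 0.

Lemma qfa01_mm_step a v v' pa pr {w} :
  col5 (nonhalting_part (mulmx5 (U01 a) v)) = col5 v' ->
  `|mulmx5 (U01 a) v 3| ^+ 2 = pa -> `|mulmx5 (U01 a) v 4| ^+ 2 = pr ->
  qfa_mm qfa01 (col5 v) (a :: w) =
  (pa + (qfa_mm qfa01 (col5 v') w).1, pr + (qfa_mm qfa01 (col5 v') w).2).
Proof.
move=> <- <- <-.
have -> : col5 (nonhalting_part (mulmx5 (U01 a) v)) =
    \col_q (if q_non qfa01 q then (mx5 (U01 a) *m col5 v) q 0 else 0).
  apply/matrixP => i j; rewrite [LHS]mxE [RHS]mxE mul_mx5_col5 /nonhalting_part.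
  by case: i => [[|[|[|[|[|i]]]]]].
rewrite /=; congr (_ + _, _ + _); rewrite big_mkcond; under eq_bigr do rewrite mul_mx5_col5.
- by rewrite (sum_ord5 (fun i => if i == 3%N then `|mulmx5 (U01 a) v i| ^+ 2 else 0)) /= !add0r addr0.
- by rewrite (sum_ord5 (fun i => if i == 4%N then `|mulmx5 (U01 a) v i| ^+ 2 else 0)) /= !add0r.
Qed.

Lemma qfa01_mm_silent a v v' {w} :
  col5 (nonhalting_part (mulmx5 (U01 a) v)) = col5 v' ->
  `|mulmx5 (U01 a) v 3| ^+ 2 = 0 -> `|mulmx5 (U01 a) v 4| ^+ 2 = 0 ->
  qfa_mm qfa01 (col5 v) (a :: w) = qfa_mm qfa01 (col5 v') w.
Proof. by move=> next acc rej; rewrite (qfa01_mm_step next acc rej) !add0r; case: qfa_mm. Qed.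

Definition psi_init (i : nat) : C := (i == 0%N)%:R.
Definition psi_live (i : nat) : C := match i with 1 => 3/5 | 2 => 4/5 | _ => 0 end.
Definition psi_after1 (i : nat) : C := match i with 2 => 4/5 | _ => 0 end.

Lemma qfa01_init : qfa_init qfa01 = col5 psi_init.
Proof. by apply/matrixP => i j; rewrite !mxE. Qed.

Ltac solve_next5 := let i := fresh "i" in
  apply: col5_ext => i; case5 i; move=> _;
  rewrite /nonhalting_part /mulmx5 /psi_init /psi_live /psi_after1 /=; field.
Ltac solve_prob5 :=
  rewrite normCK /mulmx5 /psi_init /psi_live /psi_after1 /=; conjC_rat; field.

Lemma qfa01_mm_lend w :
  qfa_mm qfa01 (col5 psi_init) (LEnd :: w) = qfa_mm qfa01 (col5 psi_live) w.
Proof. by apply: qfa01_mm_silent; [solve_next5 | solve_prob5 | solve_prob5]. Qed.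

Lemma qfa01_mm_live_zero w :
  qfa_mm qfa01 (col5 psi_live) (Sym _ false :: w) = qfa_mm qfa01 (col5 psi_live) w.
Proof. by apply: qfa01_mm_silent; [solve_next5 | solve_prob5 | solve_prob5]. Qed.

Lemma qfa01_mm_live_one w :
  qfa_mm qfa01 (col5 psi_live) (Sym _ true :: w) =
  ((qfa_mm qfa01 (col5 psi_after1) w).1, 9/25 + (qfa_mm qfa01 (col5 psi_after1) w).2).
Proof.
rewrite (qfa01_mm_step (v' := psi_after1) (pa := 0) (pr := 9/25)) ?add0r //.
all: by [solve_next5 | solve_prob5].
Qed.

Lemma qfa01_mm_live_rend : qfa_mm qfa01 (col5 psi_live) [:: REnd] = (16/25, 9/25).
Proof.
rewrite (qfa01_mm_step (pa := 16/25) (pr := 9/25) erefl) ?addr0 //.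
all: by solve_prob5.
Qed.

Lemma qfa01_mm_after1_one w :
  qfa_mm qfa01 (col5 psi_after1) (Sym _ true :: w) = qfa_mm qfa01 (col5 psi_after1) w.
Proof. by apply: qfa01_mm_silent; [solve_next5 | solve_prob5 | solve_prob5]. Qed.

Lemma qfa01_mm_after1_rend : qfa_mm qfa01 (col5 psi_after1) [:: REnd] = (16/25, 0).
Proof.
rewrite (qfa01_mm_step (pa := 16/25) (pr := 0) erefl) ?addr0 //.
all: by solve_prob5.
Qed.

Lemma qfa01_mm_after1_zero w :
  144/625 <= (qfa_mm qfa01 (col5 psi_after1) (Sym _ false :: w)).2.
Proof.
rewrite (qfa01_mm_step (pr := 144/625) erefl erefl) /= ?lerDl ?qfa_mm_rej_ge0 //.
by solve_prob5.
Qed.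

Lemma qfa01_mm_after1_tail x :
  (all id x ->
     (qfa_mm qfa01 (col5 psi_after1) (map (Sym _) x ++ [:: REnd])).1 = 16/25) /\
  (~~ all id x ->
     144/625 <= (qfa_mm qfa01 (col5 psi_after1) (map (Sym _) x ++ [:: REnd])).2).
Proof.
elim: x => [|[] x IH]; rewrite [map _ _ ++ _]/= [all _ _]/=.
- by rewrite qfa01_mm_after1_rend.
- by rewrite qfa01_mm_after1_one.
- by split=> // _; apply: qfa01_mm_after1_zero.
Qed.

Lemma qfa01_mm_live_tail x :
  (lang01 x ->
     (qfa_mm qfa01 (col5 psi_live) (map (Sym _) x ++ [:: REnd])).1 = 16/25) /\
  (~~ lang01 x ->
     9/25 + 144/625 <= (qfa_mm qfa01 (col5 psi_live) (map (Sym _) x ++ [:: REnd])).2).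
Proof.
elim: x => [|[] x IH]; rewrite [map _ _ ++ _]/= [lang01 _]/=.
- by rewrite qfa01_mm_live_rend.
- have [after1_acc after1_rej] := qfa01_mm_after1_tail x.
  by rewrite qfa01_mm_live_one lerD2l.
- by rewrite qfa01_mm_live_zero.
Qed.

Lemma qfa01_correct x : qfa_correct qfa01 (256/625) (lang01 x) x.
Proof.
rewrite /qfa_correct /qfa_pacc /qfa_prej qfa01_init /tape qfa01_mm_lend.
have [live_acc live_rej] := qfa01_mm_live_tail x.
have -> : (1 - 256/625 : C) = 9/25 + 144/625 by field.
case: ifP => [/live_acc -> | /negbT/live_rej //].
have margin : (16/25 - (9/25 + 144/625) : C) = 31/625 by field.
by rewrite -subr_ge0 margin divr_ge0 ?ler0n.
Qed.

Lemma lang01_in_1QFA : in_1QFA (lang01 : pred (seq bool)).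
Proof.
exists qfa01, (256/625); split; first exact: qfa01_wf.
split; last exact: qfa01_correct.
apply/andP; split; first by rewrite divr_ge0 ?ler0n.
have margin : (1/2 - 256/625 : C) = 113/1250 by field.
by rewrite -subr_gt0 margin divr_gt0 ?ltr0n.
Qed.

Theorem corollary4p2 :
  (exists (S : finType) (L : pred (seq S)), in_1QFA L /\ ~ in_1RFA_n L) /\
  ~ (forall (S : finType) (L : pred (seq S)), in_1RFA_n L <-> in_1QFA_n L).
Proof.
split; first by exists bool, lang01; split; [exact: lang01_in_1QFA | exact: lang01_not_in_1RFA_n].
move=> same_classes; apply: lang01_not_in_1RFA_n.
by apply/same_classes/in_1QFA_sub_1QFA_n/lang01_in_1QFA.
Qed.
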